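(* Let $A\in\mathbb{H}^{m\times n}$ have full column rank, let $p\ge2$ be an integer, $\alpha\in(0,2/\|A\|_2^2)$, $X_0=\alpha A^H$, and $X_{k+1}=\sum_{i=0}^{p-1}F_k^{\,i}X_k$ where $F_k=I_n-X_kA$. Then $\|F_k\|_2\le\|F_0\|_2^{\,p^k}\to0$, hence $X_kA\to I_n$; moreover $AX_k\to P=AA^\dagger$; and $(X_k)$ converges in operator norm to $A^\dagger$.
   Context: $\mathbb{H}$ denotes the real quaternions; $X^H=\overline{X}^\top$ is the quaternionic conjugate transpose; $\|\cdot\|_2$ is the operator norm induced by the Euclidean norm $\|x\|_2=\sqrt{\mathrm{Re}\,x^Hx}$. $A^\dagger$ is the Moore–Penrose pseudoinverse: the unique $A^\dagger\in\mathbb{H}^{n\times m}$ with $AA^\dagger A=A$, $A^\dagger AA^\dagger=A^\dagger$, $(AA^\dagger)^H=AA^\dagger$, $(A^\dagger A)^H=A^\dagger A$. All products are quaternionic matrix products in the written order. *)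

From HB Require Import structures.
From mathcomp Require Import all_boot all_order all_algebra.
From mathcomp Require Import all_classical all_reals all_analysis.
From mathcomp Require Import ring.
Set Implicit Arguments. Unset Strict Implicit. Unset Printing Implicit Defensive.
Import Order.TTheory GRing.Theory Num.Theory.
Local Open Scope ring_scope.
Local Open Scope classical_set_scope.

Section Quaternions.
Variable R : realType.

Record quat := Quat { qr : R; qi : R; qj : R; qk : R }.

Definition quat_to (q : quat) := (qr q, qi q, qj q, qk q).
Definition quat_of (t : R * R * R * R) := let: (a, b, c, d) := t in Quat a b c d.
Lemma quat_toK : cancel quat_to quat_of. Proof. by case. Qed.
HB.instance Definition _ := Choice.copy quat (can_type quat_toK).

Definition qzero := Quat 0 0 0 0.
Definition qopp (q : quat) := Quat (- qr q) (- qi q) (- qj q) (- qk q).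
Definition qadd (p q : quat) :=
  Quat (qr p + qr q) (qi p + qi q) (qj p + qj q) (qk p + qk q).

Lemma qaddA : associative qadd.
Proof. by move=> [? ? ? ?] [? ? ? ?] [? ? ? ?]; rewrite /qadd /=; congr Quat; ring. Qed.
Lemma qaddC : commutative qadd.
Proof. by move=> [? ? ? ?] [? ? ? ?]; rewrite /qadd /=; congr Quat; ring. Qed.
Lemma qadd0 : left_id qzero qadd.
Proof. by move=> [? ? ? ?]; rewrite /qadd /=; congr Quat; ring. Qed.
Lemma qaddN : left_inverse qzero qopp qadd.
Proof. by move=> [? ? ? ?]; rewrite /qadd /=; congr Quat; ring. Qed.

HB.instance Definition _ := GRing.isZmodule.Build quat qaddA qaddC qadd0 qaddN.

Definition qone := Quat 1 0 0 0.
(** Hamilton product: i^2 = j^2 = k^2 = ijk = -1. *)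
Definition qmul (p q : quat) :=
  Quat (qr p * qr q - qi p * qi q - qj p * qj q - qk p * qk q)
       (qr p * qi q + qi p * qr q + qj p * qk q - qk p * qj q)
       (qr p * qj q - qi p * qk q + qj p * qr q + qk p * qi q)
       (qr p * qk q + qi p * qj q - qj p * qi q + qk p * qr q).

Lemma qmulA : associative qmul.
Proof. by move=> [? ? ? ?] [? ? ? ?] [? ? ? ?]; rewrite /qmul /=; congr Quat; ring. Qed.
Lemma qmul1 : left_id qone qmul.
Proof. by move=> [? ? ? ?]; rewrite /qmul /=; congr Quat; ring. Qed.
Lemma qmulr1 : right_id qone qmul.
Proof. by move=> [? ? ? ?]; rewrite /qmul /=; congr Quat; ring. Qed.
Lemma qmulDl : left_distributive qmul qadd.
Proof. by move=> [? ? ? ?] [? ? ? ?] [? ? ? ?]; rewrite /qmul /qadd /=; congr Quat; ring. Qed.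
Lemma qmulDr : right_distributive qmul qadd.
Proof. by move=> [? ? ? ?] [? ? ? ?] [? ? ? ?]; rewrite /qmul /qadd /=; congr Quat; ring. Qed.
Lemma qone_neq0 : qone != qzero.
Proof. by apply/eqP => -[] /eqP; rewrite oner_eq0. Qed.

HB.instance Definition _ :=
  GRing.Zmodule_isNzRing.Build quat qmulA qmul1 qmulr1 qmulDl qmulDr qone_neq0.

Definition qconj (q : quat) := Quat (qr q) (- qi q) (- qj q) (- qk q).
Definition qofR (r : R) : quat := Quat r 0 0 0.

Definition hconj m n (X : 'M[quat]_(m, n)) : 'M[quat]_(n, m) := (map_mx qconj X)^T.

Definition vnorm n (x : 'cV[quat]_n) : R := Num.sqrt (qr ((hconj x *m x) 0 0)).

Definition opnorm m n (X : 'M[quat]_(m, n)) : R :=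
  sup [set vnorm (X *m x) / vnorm x | x in [set x : 'cV[quat]_n | x != 0]].

(** Full column rank: the columns are (right-)linearly independent. *)
Definition full_col_rank m n (A : 'M[quat]_(m, n)) : Prop :=
  forall x : 'cV[quat]_n, A *m x = 0 -> x = 0.

Definition is_pinv m n (A : 'M[quat]_(m, n)) (Ad : 'M[quat]_(n, m)) : Prop :=
  [/\ A *m Ad *m A = A, Ad *m A *m Ad = Ad,
      hconj (A *m Ad) = A *m Ad & hconj (Ad *m A) = Ad *m A].

Fixpoint nsX m n (A : 'M[quat]_(m, n)) (alpha : R) (p : nat) (k : nat)
  : 'M[quat]_(n, m) :=
  match k with
  | 0 => map_mx (fun q => qofR alpha * q) (hconj A)
  | k'.+1 => let Xk := nsX A alpha p k' in
             \sum_(i < p) ((1%:M - Xk *m A) ^+ i) *m Xk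
  end.

Definition nsF m n (A : 'M[quat]_(m, n)) (alpha : R) (p k : nat) : 'M[quat]_n :=
  1%:M - nsX A alpha p k *m A.

End Quaternions.

From HB Require Import structures.
From mathcomp Require Import all_boot all_order all_algebra.
From mathcomp Require Import all_classical all_reals all_analysis.
From mathcomp Require Import ring lra.
Import Order.TTheory GRing.Theory Num.Theory.
Import numFieldNormedType.Exports.
Local Open Scope classical_set_scope.
Local Open Scope ring_scope.
Set Implicit Arguments. Unset Strict Implicit. Unset Printing Implicit Defensive.

(* Since [X_k A = 1 - F_k], the recursion gives [F_{k+1} = 1 - \sum_{i<p} F_k^i (1 - F_k)
   = F_k^p], so submultiplicativity of the operator norm yields [|F_k| <= |F_0|^(p^k)].
   For [F_0 = 1 - alpha A^H A] one has [|F_0 x|^2 <= |x|^2 - alpha (2 - alpha |A|^2) |A x|^2],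
   and [|A x|] is bounded below because [A^+ A = 1] (full column rank); hence [|F_0| < 1].
   Finally every [X_k] is of the form [Y A^H], so [X_k A A^+ = X_k], whence
   [X_k - A^+ = - F_k A^+] and [A X_k - A A^+ = A (X_k - A^+)] vanish with [F_k]. *)

Section QuaternionDot.
Variable R : realType.
Local Notation H := (quat R).

Lemma qrB : {morph @qr R : a b / a - b}. Proof. by []. Qed.
Lemma qiB : {morph @qi R : a b / a - b}. Proof. by []. Qed.
Lemma qjB : {morph @qj R : a b / a - b}. Proof. by []. Qed.
Lemma qkB : {morph @qk R : a b / a - b}. Proof. by []. Qed.
Lemma qconjB : {morph @qconj R : a b / a - b}.
Proof. by move=> [? ? ? ?] [? ? ? ?]; congr Quat => /=; ring. Qed.

HB.instance Definition _ := GRing.isZmodMorphism.Build H R (@qr R) qrB.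
HB.instance Definition _ := GRing.isZmodMorphism.Build H R (@qi R) qiB.
HB.instance Definition _ := GRing.isZmodMorphism.Build H R (@qj R) qjB.
HB.instance Definition _ := GRing.isZmodMorphism.Build H R (@qk R) qkB.
HB.instance Definition _ := GRing.isZmodMorphism.Build H H (@qconj R) qconjB.

Lemma qconjM (a b : H) : qconj (a * b) = qconj b * qconj a.
Proof. by case: a b => ? ? ? ? [? ? ? ?]; rewrite /qconj; congr Quat => /=; ring. Qed.

Definition qdot (a b : H) : R :=
  qr a * qr b + qi a * qi b + qj a * qj b + qk a * qk b.

Lemma qr_qconjM (a b : H) : qr (qconj a * b) = qdot a b.
Proof. by case: a b => ? ? ? ? [? ? ? ?]; rewrite /qdot /=; ring. Qed.

Lemma qdotC (a b : H) : qdot a b = qdot b a.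
Proof. by rewrite /qdot; ring. Qed.

Lemma qdotDl (a b c : H) : qdot (a + b) c = qdot a c + qdot b c.
Proof. by rewrite /qdot !raddfD /=; ring. Qed.

Lemma qdotNl (a c : H) : qdot (- a) c = - qdot a c.
Proof. by rewrite /qdot !raddfN /=; ring. Qed.

Lemma qdotZl r (a c : H) : qdot (qofR r * a) c = r * qdot a c.
Proof. by case: a c => ? ? ? ? [? ? ? ?]; rewrite /qdot /=; ring. Qed.

Lemma qdot_ge0 (a : H) : 0 <= qdot a a.
Proof. by rewrite /qdot -!expr2 !addr_ge0 ?sqr_ge0. Qed.

Lemma qdot_eq0 (a : H) : qdot a a = 0 -> a = 0.
Proof. by case: a => ? ? ? ?; rewrite /qdot /= => h; congr Quat; nra. Qed.

Lemma qdotMM (a b : H) : qdot (a * b) (a * b) = qdot a a * qdot b b.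
Proof. by case: a b => ? ? ? ? [? ? ? ?]; rewrite /qdot /=; ring. Qed.

Lemma qdotD_le (a b : H) :
  qdot (a + b) (a + b) <= 2 * (qdot a a + qdot b b).
Proof.
case: a b => a1 a2 a3 a4 [b1 b2 b3 b4]; rewrite /qdot /=.
have := qdot_ge0 (Quat (a1 - b1) (a2 - b2) (a3 - b3) (a4 - b4)).
by rewrite /qdot /=; lra.
Qed.

Lemma qdot_sum_le N (y : 'I_N -> H) :
  qdot (\sum_j y j) (\sum_j y j) <= 2 ^+ N * \sum_j qdot (y j) (y j).
Proof.
elim: N y => [|N IH] y; first by rewrite !big_ord0 /qdot /= !mulr0 !addr0.
rewrite !big_ord_recr /= exprS -mulrA mulrDr.
apply: le_trans (qdotD_le _ _) _; rewrite ler_pM2l // lerD ?IH //.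
by apply: ler_peMl; [exact: qdot_ge0 | apply: exprn_ege1; rewrite ler1n].
Qed.

End QuaternionDot.

Section VectorDot.
Variable R : realType.
Local Notation H := (quat R).

Definition vdot n (u v : 'cV[H]_n) : R := \sum_i qdot (u i 0) (v i 0).

Lemma vdotE n (u v : 'cV[H]_n) : qr ((hconj u *m v) 0 0) = vdot u v.
Proof. by rewrite mxE raddf_sum; apply: eq_bigr => k _; rewrite !mxE; exact: qr_qconjM. Qed.

Lemma vnormE n (u : 'cV[H]_n) : vnorm u = Num.sqrt (vdot u u).
Proof. by rewrite /vnorm vdotE. Qed.

Lemma vdotC n (u v : 'cV[H]_n) : vdot u v = vdot v u.
Proof. by apply: eq_bigr => i _; rewrite qdotC. Qed.

Lemma vdot_ge0 n (u : 'cV[H]_n) : 0 <= vdot u u.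
Proof. by apply: sumr_ge0 => i _; apply: qdot_ge0. Qed.

Lemma vdot_eq0 n (u : 'cV[H]_n) : vdot u u = 0 -> u = 0.
Proof.
move/psumr_eq0P => u_eq0; apply/matrixP => i j; rewrite ord1 mxE.
by apply: qdot_eq0; apply: u_eq0 => // k _; apply: qdot_ge0.
Qed.

Lemma vdotBl n (u v w : 'cV[H]_n) : vdot (u - v) w = vdot u w - vdot v w.
Proof.
rewrite /vdot -sumrB; apply: eq_bigr => i _.
by rewrite !mxE qdotDl qdotNl.
Qed.

Lemma vdotNl n (u w : 'cV[H]_n) : vdot (- u) w = - vdot u w.
Proof. by rewrite /vdot -sumrN; apply: eq_bigr => i _; rewrite mxE qdotNl. Qed.

Lemma vdotBr n (u v w : 'cV[H]_n) : vdot w (u - v) = vdot w u - vdot w v.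
Proof. by rewrite vdotC vdotBl ![vdot _ w]vdotC. Qed.

Lemma vdotZl n r (u w : 'cV[H]_n) : vdot (qofR r *: u) w = r * vdot u w.
Proof. by rewrite /vdot mulr_sumr; apply: eq_bigr => i _; rewrite mxE qdotZl. Qed.

Lemma vdotZr n r (u w : 'cV[H]_n) : vdot w (qofR r *: u) = r * vdot w u.
Proof. by rewrite vdotC vdotZl vdotC. Qed.

Lemma hconj_mul m n p (M : 'M[H]_(m, n)) (N : 'M[H]_(n, p)) :
  hconj (M *m N) = hconj N *m hconj M.
Proof.
apply/matrixP => i j; rewrite !mxE raddf_sum; apply: eq_bigr => k _.
by rewrite !mxE; exact: qconjM.
Qed.

Lemma vdot_hconjr m n (M : 'M[H]_(m, n)) x y :
  vdot x (hconj M *m y) = vdot (M *m x) y.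
Proof. by rewrite -!vdotE hconj_mul mulmxA. Qed.

Lemma vnorm_ge0 n (x : 'cV[H]_n) : 0 <= vnorm x.
Proof. by rewrite vnormE sqrtr_ge0. Qed.

Lemma vnorm0 n : vnorm (0 : 'cV[H]_n) = 0.
Proof.
by rewrite vnormE /vdot big1 ?sqrtr0 // => i _; rewrite mxE /qdot /= !mulr0 !addr0.
Qed.

Lemma vnormN n (x : 'cV[H]_n) : vnorm (- x) = vnorm x.
Proof. by rewrite !vnormE vdotNl vdotC vdotNl opprK. Qed.

Lemma vdot_mulmx_bounded m n (M : 'M[H]_(m, n)) :
  exists2 C, 0 <= C & forall x, vdot (M *m x) (M *m x) <= C * vdot x x.
Proof.
pose K := \sum_i \sum_j qdot (M i j) (M i j).
have row_ge0 i : 0 <= \sum_j qdot (M i j) (M i j) by apply: sumr_ge0 => j _; apply: qdot_ge0.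
have K_ge0 : 0 <= K by apply: sumr_ge0.
have entry_le i j : qdot (M i j) (M i j) <= K.
  rewrite /K (bigD1 i) //= (bigD1 j) //= -addrA lerDl addr_ge0 ?sumr_ge0 // => *.
  exact: qdot_ge0.
exists (m%:R * (2 ^+ n * K)) => [|x]; first by rewrite !mulr_ge0 ?exprn_ge0.
have row_le i : qdot ((M *m x) i 0) ((M *m x) i 0) <= 2 ^+ n * K * vdot x x.
  rewrite mxE; apply: le_trans (qdot_sum_le _) _.
  rewrite -mulrA ler_wpM2l ?exprn_ge0 // mulr_sumr; apply: ler_sum => j _.
  by rewrite qdotMM ler_wpM2r ?qdot_ge0 ?entry_le.
apply: le_trans (ler_sum _ (fun i _ => row_le i)) _.
by rewrite sumr_const card_ord -[_ *+ m]mulr_natl !mulrA.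
Qed.

End VectorDot.

Section OperatorNorm.
Variable R : realType.
Local Notation H := (quat R).
Local Notation ratios M := [set vnorm (M *m x) / vnorm x | x in [set x | x != 0]].

Lemma vnorm_mulmx_bounded m n (M : 'M[H]_(m, n)) :
  exists2 C, 0 <= C & forall x, vnorm (M *m x) <= C * vnorm x.
Proof.
have [C C0 hC] := vdot_mulmx_bounded M.
exists (Num.sqrt C) => [|x]; first exact: sqrtr_ge0.
by rewrite !vnormE -sqrtrM // ler_sqrt // mulr_ge0 ?vdot_ge0.
Qed.

Lemma ratios_ubound m n (M : 'M[H]_(m, n)) b : 0 <= b ->
  (forall x, vnorm (M *m x) <= b * vnorm x) -> ubound (ratios M) b.
Proof.
move=> b0 hb _ [x _ <-].
have [->|vx_neq0] := eqVneq (vnorm x) 0; first by rewrite invr0 mulr0.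
by rewrite ler_pdivrMr // lt_def vx_neq0 vnorm_ge0.
Qed.

Lemma opnorm_le m n (M : 'M[H]_(m, n)) b :
  0 <= b -> (forall x, vnorm (M *m x) <= b * vnorm x) -> opnorm M <= b.
Proof.
move=> b0 hb; rewrite /opnorm.
have [->|/set0P ne] := eqVneq (ratios M) set0; first by rewrite sup0.
exact: ge_sup ne (ratios_ubound b0 hb).
Qed.

Lemma ratios_has_ubound m n (M : 'M[H]_(m, n)) : has_ubound (ratios M).
Proof. by have [C C0 hC] := vnorm_mulmx_bounded M; exists C; apply: ratios_ubound. Qed.

Lemma opnorm_ge0 m n (M : 'M[H]_(m, n)) : 0 <= opnorm M.
Proof.
rewrite /opnorm; have [->|/set0P [y Ey]] := eqVneq (ratios M) set0.
  by rewrite sup0.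
apply: le_trans (ub_le_sup (ratios_has_ubound M) Ey).
by case: Ey => x _ <-; rewrite divr_ge0 ?vnorm_ge0.
Qed.

Lemma vnorm_mulmx_le m n (M : 'M[H]_(m, n)) x :
  vnorm (M *m x) <= opnorm M * vnorm x.
Proof.
have [vx0|vx_neq0] := eqVneq (vnorm x) 0.
  by have [C _ /(_ x)] := vnorm_mulmx_bounded M; rewrite vx0 !mulr0.
rewrite -ler_pdivrMr ?lt_def ?vx_neq0 ?vnorm_ge0 //.
apply: (ub_le_sup (ratios_has_ubound M)); exists x => //.
by apply: contra_neq vx_neq0 => ->; exact: vnorm0.
Qed.

Lemma vdot_mulmx_le m n (M : 'M[H]_(m, n)) x :
  vdot (M *m x) (M *m x) <= opnorm M ^+ 2 * vdot x x.
Proof.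
have := vnorm_mulmx_le M x; rewrite !vnormE => le_sqrt.
rewrite -(sqr_sqrtr (vdot_ge0 (M *m x))) -(sqr_sqrtr (vdot_ge0 x)) -exprMn.
by rewrite lerXn2r ?nnegrE ?mulr_ge0 ?opnorm_ge0.
Qed.

Lemma opnormM m n p (M : 'M[H]_(m, n)) (N : 'M[H]_(n, p)) :
  opnorm (M *m N) <= opnorm M * opnorm N.
Proof.
apply: opnorm_le => [|x]; first by rewrite mulr_ge0 ?opnorm_ge0.
rewrite -mulmxA -mulrA; apply: le_trans (vnorm_mulmx_le _ _) _.
by rewrite ler_wpM2l ?opnorm_ge0 ?vnorm_mulmx_le.
Qed.

Lemma opnormN m n (M : 'M[H]_(m, n)) : opnorm (- M) = opnorm M.
Proof.
apply/le_anti/andP; split; apply: opnorm_le; rewrite ?opnorm_ge0 // => x.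
  by rewrite mulNmx vnormN vnorm_mulmx_le.
by rewrite -vnormN -mulNmx vnorm_mulmx_le.
Qed.

Lemma opnormX n (M : 'M[H]_n) k : opnorm (M ^+ k) <= opnorm M ^+ k.
Proof.
elim: k => [|k IH].
  by rewrite !expr0; apply: opnorm_le => // x; rewrite mul1r -idmxE mul1mx.
rewrite !exprS -mulmxE; apply: le_trans (opnormM _ _) _.
by rewrite ler_wpM2l ?opnorm_ge0.
Qed.

(* With [w = M^H y] and [s = |M|^2]: [<M w, y> = |w|^2] and [|M w|^2 <= s |w|^2], so
   expanding [0 <= |M w - s y|^2] gives [s |w|^2 <= s^2 |y|^2]. *)
Lemma vdot_hconj_mulmx_le m n (M : 'M[H]_(m, n)) y :
  vdot (hconj M *m y) (hconj M *m y) <= opnorm M ^+ 2 * vdot y y.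
Proof.
set s := opnorm M ^+ 2; set w := hconj M *m y.
have s_ge0 : 0 <= s by rewrite exprn_ge0 ?opnorm_ge0.
have Mw_le := vdot_mulmx_le M w; rewrite -/s in Mw_le.
have := vdot_ge0 (M *m w - qofR s *: y).
have Mwy : vdot (M *m w) y = vdot w w by rewrite -vdot_hconjr.
rewrite !(vdotBl, vdotBr, vdotZl, vdotZr) (vdotC y) vdot_hconjr Mwy => ge0.
have [s0|s_neq0] := eqVneq s 0.
  have Mw0 : M *m w = 0.
    by apply: vdot_eq0; apply/le_anti; rewrite vdot_ge0 andbT -(mul0r (vdot w w)) -s0.
  by rewrite s0 mul0r -Mwy Mw0 /vdot big1 // => i _; rewrite mxE /qdot /= !mul0r !addr0.
have : s * vdot w w <= s * (s * vdot y y) by nra.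
by rewrite ler_pM2l // lt_def s_neq0.
Qed.

End OperatorNorm.

Lemma sumrX_mul1B (T : pzRingType) (x : T) n :
  \sum_(i < n) x ^+ i * (1 - x) = 1 - x ^+ n.
Proof.
elim: n => [|n IH]; first by rewrite big_ord0 expr0 subrr.
by rewrite big_ord_recr /= IH mulrBr mulr1 -exprSr addrA subrK.
Qed.

Section Iteration.
Variables (R : realType) (m n : nat) (A : 'M[quat R]_(m, n)) (alpha : R) (p : nat).
Local Notation X := (nsX A alpha p).
Local Notation F := (nsF A alpha p).

Lemma nsX0E : X 0 = qofR alpha *: hconj A.
Proof. by apply/matrixP => i j; rewrite !mxE. Qed.

Lemma nsF_succ k : F k.+1 = F k ^+ p.
Proof.
have XA : X k *m A = 1%:M - F k by rewrite /nsF opprB addrC subrK.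
rewrite [in LHS]/nsF [X k.+1]/= -/(F k) mulmx_suml.
under eq_bigr => i _ do rewrite -mulmxA XA.
by rewrite !mulmxE idmxE sumrX_mul1B opprB addrC subrK.
Qed.

Lemma opnorm_nsF_le k : opnorm (F k) <= opnorm (F 0) ^+ (p ^ k).
Proof.
elim: k => [|k IH]; first by rewrite expn0 expr1.
rewrite nsF_succ expnSr exprM; apply: le_trans (opnormX _ _) _.
by rewrite lerXn2r ?nnegrE ?exprn_ge0 ?opnorm_ge0.
Qed.

Lemma nsX_mulmx_proj (P : 'M[quat R]_m) k :
  P *m A = A -> hconj P = P -> X k *m P = X k.
Proof.
move=> PA PH; elim: k => [|k IH].
  by rewrite nsX0E -scalemxAl -PH -hconj_mul PA.
by rewrite /= mulmx_suml; apply: eq_bigr => i _; rewrite -mulmxA IH.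
Qed.

End Iteration.

Lemma pinv_mulmx_full_col_rank R m n (A : 'M[quat R]_(m, n)) Ad :
  full_col_rank A -> A *m Ad *m A = A -> Ad *m A = 1%:M.
Proof.
move=> fcr AAdA; apply/eqP; rewrite -subr_eq0; apply/eqP/matrixP => i j.
have : A *m col j (Ad *m A - 1%:M) = 0.
  by rewrite colE mulmxA mulmxBr mulmx1 mulmxA AAdA subrr mul0mx.
by move/fcr/matrixP/(_ i 0); rewrite !mxE.
Qed.

Section Landweber.
Variables (R : realType) (m n : nat) (A : 'M[quat R]_(m, n)) (alpha : R).
Hypotheses (alpha_gt0 : 0 < alpha) (alpha_lt : alpha < 2 / opnorm A ^+ 2).
Local Notation s := (opnorm A ^+ 2).
Local Notation F := (1%:M - (qofR alpha *: hconj A) *m A).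

Lemma sqr_opnorm_gt0 : 0 < s.
Proof.
rewrite lt_def exprn_ge0 ?opnorm_ge0 // andbT.
by apply: contraTneq alpha_lt => ->; rewrite invr0 mulr0 -leNgt ltW.
Qed.

Lemma vdot_landweber_le x :
  vdot (F *m x) (F *m x) <= vdot x x - alpha * (2 - alpha * s) * vdot (A *m x) (A *m x).
Proof.
set y := A *m x; set w := hconj A *m y.
have Fx : F *m x = x - qofR alpha *: w by rewrite mulmxBl mul1mx -!scalemxAl -mulmxA.
have xw : vdot x w = vdot y y by rewrite vdot_hconjr.
have := vdot_hconj_mulmx_le A y; rewrite -/w => w_le.
rewrite Fx !(vdotBl, vdotBr, vdotZl, vdotZr) (vdotC w x) xw.
have := vdot_ge0 y; nra.
Qed.

(* From [|x|^2 <= d^2 |A x|^2] with [d = |L|], the previous lemma yields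
   [|F x|^2 <= r |x|^2] with [r = d^2 / (c + d^2) < 1], [c = alpha (2 - alpha s)]. *)
Lemma opnorm_landweber_lt1 (L : 'M[quat R]_(n, m)) : L *m A = 1%:M -> opnorm F < 1.
Proof.
move=> LA.
have as_lt2 : alpha * s < 2 by rewrite -ltr_pdivlMr ?sqr_opnorm_gt0.
set c := alpha * (2 - alpha * s); set d2 := opnorm L ^+ 2.
have c_gt0 : 0 < c by rewrite mulr_gt0 // subr_gt0.
have d2_ge0 : 0 <= d2 by rewrite exprn_ge0 ?opnorm_ge0.
have cd_gt0 : 0 < c + d2 by rewrite ltr_wpDr.
set r := d2 / (c + d2).
have r_ge0 : 0 <= r by rewrite divr_ge0 // ltW.
have sqrt_r_lt1 : Num.sqrt r < 1.
  by rewrite -sqrtr1 ltr_sqrt // ltr_pdivrMr // mul1r ltrDr.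
apply: le_lt_trans sqrt_r_lt1.
apply: opnorm_le => [|x]; first exact: sqrtr_ge0.
rewrite !vnormE -sqrtrM // ler_sqrt ?(mulr_ge0 r_ge0 (vdot_ge0 x)) //.
have x_le : vdot x x <= d2 * vdot (A *m x) (A *m x).
  by have := vdot_mulmx_le L (A *m x); rewrite mulmxA LA mul1mx.
apply: le_trans (vdot_landweber_le x) _.
rewrite -/c /r [d2 / _ * _]mulrAC ler_pdivlMr //.
have := vdot_ge0 (A *m x); nra.
Qed.

End Landweber.

Section Convergence.
Variable R : realType.

Lemma cvg_expr_expn (q : R) p : 0 <= q -> q < 1 -> (1 < p)%N ->
  (fun k => q ^+ (p ^ k)) @ \oo --> 0.
Proof.
move=> q_ge0 q_lt1 p_gt1.
apply: (@squeeze_cvgr _ _ _ _ (fun=> 0) (fun k => q ^+ k)); last 2 first.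
- exact: cvg_cst.
- by apply: cvg_expr; rewrite ger0_norm.
apply: nearW => k; rewrite exprn_ge0 //=.
by rewrite ler_wiXn2l // ?ltW // ltnW // ltn_expl.
Qed.

Lemma cvg0_le_scale (u g : R ^nat) C :
  (forall k, 0 <= g k <= C * u k) -> u @ \oo --> 0 -> g @ \oo --> 0.
Proof.
move=> g_le u_cvg; apply: (@squeeze_cvgr _ _ _ _ (fun=> 0) (fun k => C * u k)).
- exact: nearW.
- exact: cvg_cst.
- by rewrite -(mulr0 C); apply: cvgMr.
Qed.

End Convergence.

Theorem mainTheorem6 (R : realType) (m n : nat) (A : 'M[quat R]_(m, n))
    (Ad : 'M[quat R]_(n, m)) (p : nat) (alpha : R) :
  full_col_rank A -> is_pinv A Ad -> (2 <= p)%N ->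
  0 < alpha -> alpha < 2 / opnorm A ^+ 2 ->
  (forall k : nat, opnorm (nsF A alpha p k) <= opnorm (nsF A alpha p 0) ^+ (p ^ k)%N) /\
  ((fun k : nat => opnorm (nsF A alpha p 0) ^+ (p ^ k)%N) @ \oo --> (0 : R)) /\
  ((fun k : nat => opnorm (nsX A alpha p k *m A - 1%:M)) @ \oo --> (0 : R)) /\
  ((fun k : nat => opnorm (A *m nsX A alpha p k - A *m Ad)) @ \oo --> (0 : R)) /\
  ((fun k : nat => opnorm (nsX A alpha p k - Ad)) @ \oo --> (0 : R)).
Proof.
move=> fcr [AAdA _ AAdH _] p_ge2 alpha_gt0 alpha_lt.
have F0_lt1 : opnorm (nsF A alpha p 0) < 1.
  rewrite /nsF nsX0E.
  exact: opnorm_landweber_lt1 (pinv_mulmx_full_col_rank fcr AAdA).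
have q_cvg := cvg_expr_expn (opnorm_ge0 _) F0_lt1 p_ge2.
have X_Ad k : nsX A alpha p k - Ad = - (nsF A alpha p k *m Ad).
  by rewrite mulmxBl mul1mx -mulmxA nsX_mulmx_proj ?mulmxA // opprB.
have X_Ad_le k : opnorm (nsX A alpha p k - Ad)
    <= opnorm Ad * opnorm (nsF A alpha p 0) ^+ (p ^ k).
  rewrite X_Ad opnormN mulrC; apply: le_trans (opnormM _ _) _.
  by rewrite ler_wpM2r ?opnorm_ge0 ?opnorm_nsF_le.
split; first exact: opnorm_nsF_le.
split; first exact: q_cvg.
split; last split.
- apply: (cvg0_le_scale (C := 1) _ q_cvg) => k.
  by rewrite -opprB opnormN opnorm_ge0 mul1r /=; exact: opnorm_nsF_le.
- apply: (cvg0_le_scale (C := opnorm A * opnorm Ad) _ q_cvg) => k.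
  rewrite opnorm_ge0 -mulmxBr -mulrA /=; apply: le_trans (opnormM _ _) _.
  by rewrite ler_wpM2l ?opnorm_ge0 //; exact: X_Ad_le.
- apply: (cvg0_le_scale (C := opnorm Ad) _ q_cvg) => k.
  by rewrite opnorm_ge0 /=; exact: X_Ad_le.
Qed.
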